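(* Work in $\ell_1$ over $\mathbb{C}$ with sequences indexed by $\{0,1,2,\dots\}$ and standard basis $(e_k)$. Let $\xi$ be uniform on $\{-1,1\}$, and let $A$ be the diagonal operator $Ae_0=0$, $Ae_k=i\xi k\,e_k$ for $k\ge1$, so $e^{At}e_k=e^{i\xi kt}e_k$ and $\mathbb{E}e^{At}e_k=\cos(kt)e_k$. Let $\xi_1,\xi_2,\dots$ be i.i.d. copies of $\xi$ and $A_i$ defined as $A$ with $\xi_i$ in place of $\xi$. Then for every $T>0$ and every $n$ large enough (for every outcome $\omega$), $$\sup_{t\in[0,T]}\Big\|e^{A_1t/n}\cdots e^{A_nt/n}-\big(\mathbb{E}e^{At/n}\big)^n\Big\|_{\mathcal{L}(\ell_1)}\ge1;$$ in particular the law of large numbers fails in the operator norm topology for this sequence.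
   Context: $(\Omega,\mathcal{F},\Pr)$ is a probability space; $e^{Bt}=\sum_k t^kB^k/k!$ for bounded $B$ and, for diagonal $B$ with unbounded entries as here, $e^{Bt}$ is the diagonal operator with entries $e^{b_{kk}t}$; $\mathbb{E}$ of a random operator is the Pettis integral (entrywise expectation). *)

From HB Require Import structures.
From mathcomp Require Import all_boot all_order all_algebra.
From mathcomp Require Import all_classical all_reals all_analysis.
From mathcomp Require Import complex.
Set Implicit Arguments. Unset Strict Implicit. Unset Printing Implicit Defensive.
Import Order.TTheory GRing.Theory Num.Theory.
Local Open Scope classical_set_scope.
Local Open Scope ring_scope.
Local Open Scope complex_scope.

Section Defs.
Variable R : realType.
Local Notation C := R[i].

Definition cexp (z : C) : C :=
  (expR (complex.Re z) * cos (complex.Im z)) +i* (expR (complex.Re z) * sin (complex.Im z)).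

Definition cabs (z : C) : R := Normc.normc z.

Definition sequ := nat -> C.
Definition op := sequ -> sequ.

(* ell_1 norm (possibly +oo; x is in ell_1 iff it is finite) *)
Definition l1norm (x : sequ) : \bar R := (\sum_(0 <= k <oo) (cabs (x k))%:E)%E.

Definition opnorm (L : op) : \bar R :=
  ereal_sup [set l1norm (L x) | x in [set x : sequ | (l1norm x <= 1)%E]].

Definition op_sub (L1 L2 : op) : op := fun x k => L1 x k - L2 x k.

Definition diag (b : nat -> C) : op := fun x k => b k * x k.

Definition exp_diag (b : nat -> C) (t : R) : op := diag (fun k => cexp (b k * t%:C)).

Definition prod_ops (F : nat -> op) (n : nat) : op :=
  foldr (fun i acc => F i \o acc) id (iota 1 n).

Definition op_pow (L : op) (n : nat) : op := iter n (fun M => L \o M) id.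

Definition A_diag (xi : R) : nat -> C := fun k => 'i * (xi * k%:R)%:C.

Definition cexpect d (T : measurableType d) (P : probability T R) (Z : T -> C) : C :=
  fine ('E_P[fun w => complex.Re (Z w)]) +i* fine ('E_P[fun w => complex.Im (Z w)]).

(* Pettis (entrywise) expectation of a random diagonal operator diag (D w) *)
Definition expect_diag d (T : measurableType d) (P : probability T R)
  (D : T -> nat -> C) : op := diag (fun k => cexpect P (fun w => D w k)).

Definition mutually_independent d (T : measurableType d) (P : probability T R)
  (X : nat -> T -> R) : Prop :=
  forall (I : seq nat) (B : nat -> set R), uniq I ->
    (forall i, measurable (B i)) ->
    P (\bigcap_(i in [set j | j \in I]) (X i @^-1` B i)) =
    (\prod_(i <- I) P (X i @^-1` B i))%E.

End Defs.

(* At time t = n pi / (2 k) the k-th diagonal entry of e^{A_i t/n} is i xi_i, a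
   unit complex number, whereas E e^{A t/n} has k-th entry cos(pi/2) = 0.  Hence the
   difference of the two diagonal operators has k-th entry of modulus 1, and testing
   it on e_k bounds its operator norm by 1 from below.  Choosing k large makes
   t <= T; the bound holds for every outcome. *)
From HB Require Import structures.
From mathcomp Require Import all_boot all_order all_algebra.
From mathcomp Require Import all_classical all_reals all_analysis.
From mathcomp Require Import complex.
From mathcomp Require Import lra ring.
Set Implicit Arguments.
Unset Strict Implicit.
Unset Printing Implicit Defensive.
Import Order.TTheory GRing.Theory Num.Theory.
Local Open Scope classical_set_scope.
Local Open Scope ring_scope.
Local Open Scope complex_scope.

Section DiagonalOperators.
Variable R : realType.
Local Notation C := R[i].

Lemma cabs_ge0 (z : C) : 0 <= cabs z.
Proof. by case: z => a b; rewrite /cabs /= sqrtr_ge0. Qed.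

Lemma cabs_prod_unit (s : seq nat) (F : nat -> C) :
  (forall i, cabs (F i) = 1) -> cabs (\prod_(i <- s) F i) = 1.
Proof.
move=> F1; apply: (big_ind (fun z => cabs z = 1)) => //.
- exact: Normc.normc1.
- by move=> a b ha hb; rewrite /cabs Normc.normcM -/(cabs a) -/(cabs b) ha hb mulr1.
Qed.

Lemma cabs_iR_sign (x : R) : x = 1 \/ x = -1 -> cabs (0 +i* x) = 1.
Proof. by case=> ->; rewrite /cabs /= expr0n add0r ?sqrrN expr1n sqrtr1. Qed.

Definition basis_sequ (k : nat) : sequ R := fun j => (j == k)%:R.

Lemma l1norm_supported1 (x : sequ R) k : (forall j, j != k -> x j = 0) ->
  l1norm x = (cabs (x k))%:E.
Proof.
move=> xk0; have cabs0 : cabs (0 : C) = 0 by exact: Normc.normc0.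
rewrite /l1norm (nneseries_split 0 k.+1); last by move=> j _; rewrite lee_fin cabs_ge0.
rewrite add0n eseries0 ?adde0; last first.
  by move=> i ki _; rewrite xk0 ?cabs0 // gtn_eqF.
rewrite big_nat_recr //= big1_seq ?add0e // => i.
by rewrite mem_index_iota => /andP[_ ik]; rewrite xk0 ?cabs0 // ltn_eqF.
Qed.

Lemma l1norm_basis_sequ k : l1norm (basis_sequ k) = 1%E.
Proof.
rewrite (@l1norm_supported1 _ k) /basis_sequ ?eqxx; first exact/congr1/Normc.normc1.
by move=> j /negbTE ->.
Qed.

Lemma opnorm_ge (L : op R) (x : sequ R) :
  (l1norm x <= 1)%E -> (l1norm (L x) <= opnorm L)%E.
Proof. by move=> x1; apply: ereal_sup_ubound; exists x. Qed.

Lemma opnorm_diag_ge (b : nat -> C) k : ((cabs (b k))%:E <= opnorm (diag b))%E.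
Proof.
have supp_k j : j != k -> diag b (basis_sequ k) j = 0.
  by move=> jk; rewrite /diag /basis_sequ (negbTE jk) mulr0.
have e_k_ball : (l1norm (basis_sequ k) <= 1)%E by rewrite l1norm_basis_sequ.
have := @opnorm_ge (diag b) _ e_k_ball.
by rewrite (l1norm_supported1 supp_k) /diag /basis_sequ eqxx mulr1.
Qed.

Lemma foldr_diag (b : nat -> nat -> C) (s : seq nat) :
  foldr (fun i acc => diag (b i) \o acc) id s = diag (fun j => \prod_(i <- s) b i j).
Proof.
apply/funext => x; apply/funext => j.
elim: s => [|a s IH] /=; first by rewrite /diag big_nil mul1r.
by rewrite {1}/diag IH /diag big_cons mulrA.
Qed.

Lemma op_pow_diag (c : nat -> C) n : op_pow (diag c) n = diag (fun j => c j ^+ n).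
Proof.
apply/funext => x; apply/funext => j.
elim: n => [|n IH]; first by rewrite /diag /= expr0 mul1r.
by rewrite /= {1}/diag IH /diag exprS mulrA.
Qed.

Lemma op_sub_diag (b c : nat -> C) : op_sub (diag b) (diag c) = diag (b \- c).
Proof. by apply/funext => x; apply/funext => j; rewrite /op_sub /diag /= mulrBl. Qed.

Lemma cexp_iR (c : R) : cexp (0 +i* c) = cos c +i* sin c.
Proof. by rewrite /cexp /= expR0 !mul1r. Qed.

Lemma cexp_A_diag_pihalf (x : R) k (s : R) : x = 1 \/ x = -1 ->
  k%:R * s = pi / 2 -> cexp (A_diag x k * s%:C) = 0 +i* x.
Proof.
move=> xpm ks.
have -> : A_diag x k * s%:C = 0 +i* (x * (k%:R * s)).
  by rewrite /A_diag; simpc; rewrite mulrA.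
rewrite ks cexp_iR; case: xpm => ->.
  by rewrite mul1r cos_pihalf sin_pihalf.
by rewrite mulN1r cosN sinN cos_pihalf sin_pihalf.
Qed.

Lemma exists_pihalf_time (T : R) n : 0 < T -> (0 < n)%N ->
  exists k : nat, exists2 t, t \in `[0, T] & k%:R * (t / n%:R) = pi / 2.
Proof.
move=> T0 n0; have pi0 : (0 : R) < pi := pi_gt0 R.
have n0R : (0 : R) < n%:R by rewrite ltr0n.
pose k := (Num.truncn ((n%:R : R) * pi / (2 * T))).+1.
have k0 : (0 : R) < k%:R by rewrite ltr0n.
have kgt : n%:R * pi / (2 * T) < k%:R by exact: truncnS_gt.
exists k, (n%:R * (pi / (2 * k%:R)));
  last by field; apply/andP; split; apply/eqP; lra.
rewrite in_itv /=; apply/andP; split.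
  by rewrite mulr_ge0 ?divr_ge0 ?mulr_ge0 // ltW.
rewrite mulrA ler_pdivrMr ?mulr_gt0 //.
rewrite ltr_pdivrMr ?mulr_gt0 // in kgt; nra.
Qed.

End DiagonalOperators.

Lemma expectation_rademacher (R : realType) d (Omega : measurableType d)
    (P : probability Omega R) (X : Omega -> R) :
  measurable_fun setT X -> (forall w, X w = 1 \/ X w = -1) ->
  P (X @^-1` [set 1]) = (2^-1)%:E -> ('E_P[X] = 0)%E.
Proof.
move=> mX Xpm Xunif; set A := X @^-1` [set 1].
have mA : measurable A by rewrite -[A]setTI; exact: mX.
have -> : X = (2 \o* (\1_A : Omega -> R)) \- cst 1.
  apply/funext => w /=; rewrite indicE.
  case: (Xpm w) => Xw; first by rewrite mem_set /A /= ?Xw //; lra.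
  rewrite memNset; first by rewrite Xw mul0r sub0r.
  by rewrite /A /preimage /= Xw => /= h; move: (h : (-1 : R) = 1); lra.
have IA : (\1_A : Omega -> R) \in Lfun P 1.
  by apply/Lfun1_integrable; exact: integrable_indic.
rewrite expectationB; [|exact: (@Lfun_scale _ _ _ _ _ 2 1)|exact: Lfun_cst].
rewrite expectationZl // expectation_indic // expectation_cst /A Xunif.
by rewrite -EFinM -EFinB; congr EFin; field.
Qed.

Lemma cexpect_iR (R : realType) d (Omega : measurableType d)
    (P : probability Omega R) (X : Omega -> R) :
  cexpect P (fun w => 0 +i* X w) = 0 +i* fine 'E_P[X].
Proof. by rewrite /cexpect /= expectation_cst. Qed.

Theorem mainTheorem10 (R : realType) (d : measure_display) (Omega : measurableType d)
  (P : probability Omega R) (xi : Omega -> R) (xis : nat -> Omega -> R)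
  (xi_meas : measurable_fun setT xi)
  (xi_val : forall w, xi w = 1 \/ xi w = -1)
  (xi_unif : P (xi @^-1` [set 1]) = (2^-1)%:E)
  (xis_meas : forall i, measurable_fun setT (xis i))
  (xis_val : forall i w, xis i w = 1 \/ xis i w = -1)
  (xis_law : forall i (B : set R), measurable B ->
     P (xis i @^-1` B) = P (xi @^-1` B))
  (xis_indep : mutually_independent P xis) :
  forall T : R, 0 < T ->
  exists N : nat, forall n : nat, (N <= n)%N -> forall w : Omega,
    (1 <= ereal_sup [set opnorm
        ((op_sub (prod_ops (fun i => exp_diag (A_diag (xis i w)) (t / n%:R)) n)
                (op_pow (expect_diag P (fun w' => fun k =>
                            cexp (A_diag (xi w') k * (t / n%:R)%:C))) n))%R)
       | t in `[0%R, T]%classic])%E.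
Proof.
move=> T T0; exists 1%N => n n0 w.
have [k [t tT kt]] := exists_pihalf_time T0 n0.
apply: le_trans (ereal_sup_ubound (ex_intro2 _ _ t tT erefl)).
rewrite /prod_ops /exp_diag /expect_diag foldr_diag op_pow_diag op_sub_diag.
apply: le_trans (opnorm_diag_ge _ k); rewrite lee_fin /=.
have Eentry : cexpect P (fun w' => cexp (A_diag (xi w') k * (t / n%:R)%:C)) = 0.
  under eq_fun do rewrite cexp_A_diag_pihalf //.
  by rewrite cexpect_iR expectation_rademacher.
rewrite Eentry expr0n (gtn_eqF n0) subr0 cabs_prod_unit // => i.
by rewrite cexp_A_diag_pihalf // cabs_iR_sign.
Qed.
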